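(* Let $n\ge 1$ and let $\tau\ge 0$ be real. Set $\tau'=\dfrac{\tau}{(n-1)\tau+n}$. Then $$\Omega_n(\tau')\subset\tilde\Omega(\tau')\subset\Omega^n(\tau)\subset\Omega_n(n\tau),$$ where these subsets of $\mathbb{R}^n$ are defined as follows. For $\sigma\ge 0$: $\Omega_n(\sigma)$ is the set of $\omega\in\mathbb{R}^n$ for which there is $C>0$ with $\|T\omega\|_{\mathbb{Z}}\ge C\,T^{-(1+\sigma)/n}$ for every integer $T\ge 1$; $\Omega^n(\sigma)$ is the set of $\omega\in\mathbb{R}^n$ for which there is $C>0$ with $\|\langle k,\omega\rangle\|_{\mathbb{Z}}\ge C\,|k|^{-(1+\sigma)n}$ for every $k\in\mathbb{Z}^n\setminus\{0\}$; $\Omega(\sigma)$ is the set of $\omega\in\mathbb{R}^n$ for which there is $C>0$ with $T_{i+1}(\omega)\le C\,T_i(\omega)^{1+\sigma}$ for every index $i\ge 0$ for which $T_{i+1}(\omega)$ is defined; $\tilde\Omega(\sigma)$ is the set of $\omega\in\Omega(\sigma)$ such that $\langle k,\omega\rangle\notin\mathbb{Z}$ for every $k\in\mathbb{Z}^n\setminus\{0\}$.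
   Context: For $\omega=(\omega_1,\dots,\omega_n)\in\mathbb{R}^n$, $|\omega|=\max_i|\omega_i|$, $\langle\cdot,\cdot\rangle$ is the standard scalar product, $\|\omega\|_{\mathbb{Z}}=\min_{k\in\mathbb{Z}^n}|\omega-k|$, and for $x\in\mathbb{R}$, $\|x\|_{\mathbb{Z}}=\min_{k\in\mathbb{Z}}|x-k|$. The periods $T_i(\omega)$ of $\omega$ are defined by $T_0(\omega)=1$ and $T_{i+1}(\omega)=\min\{T\in\mathbb{N},\,T\ge1 : \|T\omega\|_{\mathbb{Z}}<\|T_i(\omega)\omega\|_{\mathbb{Z}}\}$ (the sequence stops if this set is empty, which happens only when $\omega$ is rational). *)

(* concrete reals R. Vectors of R^n are functions nat -> R,
   only the coordinates 0..n-1 are used; integer vectors are nat -> Z. *)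
From Stdlib Require Import Reals Lra Lia ZArith.
Open Scope R_scope.

(* floor x = Int_part x;  ||x||_Z = min_{k in Z} |x - k|, attained at floor or floor+1 *)
Definition distZ (x : R) : R :=
  Rmin (x - IZR (Int_part x)) (IZR (Int_part x) + 1 - x).

(* max of f 0, ..., f (n-1) (0 for n = 0; all values used are >= 0) *)
Fixpoint vmax (n : nat) (f : nat -> R) : R :=
  match n with
  | O => 0
  | S m => Rmax (vmax m f) (f m)
  end.

Fixpoint vsum (n : nat) (f : nat -> R) : R :=
  match n with
  | O => 0
  | S m => vsum m f + f m
  end.

(* ||omega||_Z = min_{k in Z^n} max_i |omega_i - k_i| = max_i ||omega_i||_Z *)
Definition vdistZ (n : nat) (w : nat -> R) : R := vmax n (fun i => distZ (w i)).

Definition vscale (T : nat) (w : nat -> R) : nat -> R := fun i => INR T * w i.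

Definition znorm (n : nat) (k : nat -> Z) : R := vmax n (fun i => Rabs (IZR (k i))).

Definition zdot (n : nat) (k : nat -> Z) (w : nat -> R) : R :=
  vsum n (fun i => IZR (k i) * w i).

Definition znonzero (n : nat) (k : nat -> Z) : Prop :=
  exists i, (i < n)%nat /\ k i <> 0%Z.

(* Period n w i T : T is the i-th period T_i(w) (defined). *)
Inductive Period (n : nat) (w : nat -> R) : nat -> nat -> Prop :=
| Period0 : Period n w 0 1
| PeriodS : forall i Ti T,
    Period n w i Ti ->
    (1 <= T)%nat ->
    vdistZ n (vscale T w) < vdistZ n (vscale Ti w) ->
    (forall T', (1 <= T')%nat -> (T' < T)%nat ->
        ~ (vdistZ n (vscale T' w) < vdistZ n (vscale Ti w))) ->
    Period n w (S i) T.

Definition Omega_low (n : nat) (s : R) (w : nat -> R) : Prop :=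
  exists C, 0 < C /\ forall T : nat, (1 <= T)%nat ->
    vdistZ n (vscale T w) >= C * Rpower (INR T) (- (1 + s) / INR n).

Definition Omega_up (n : nat) (s : R) (w : nat -> R) : Prop :=
  exists C, 0 < C /\ forall k : nat -> Z, znonzero n k ->
    distZ (zdot n k w) >= C * Rpower (znorm n k) (- ((1 + s) * INR n)).

Definition Omega_per (n : nat) (s : R) (w : nat -> R) : Prop :=
  exists C, 0 < C /\ forall i Ti Ti1,
    Period n w i Ti -> Period n w (S i) Ti1 ->
    INR Ti1 <= C * Rpower (INR Ti) (1 + s).

Definition Omega_tilde (n : nat) (s : R) (w : nat -> R) : Prop :=
  Omega_per n s w /\
  forall k : nat -> Z, znonzero n k -> forall m : Z, zdot n k w <> IZR m.

(* Everything rests on Dirichlet's box principle: some [T <= q^n] has [||T w|| < 1/q].  Taking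
   [q^n] just below the next period gives [T_(i+1) ||T_i w||^n <= 2^n], so a lower bound on
   [||T w||] makes the periods grow polynomially, while a rational relation [<k,w> = m] would make
   the approximations too good.  Conversely, comparing [<k,w>] with the periods around
   [1/(2 ||<k,w>||)] bounds linear forms from below through that growth.  The last inclusion is
   transference: pigeonholing integer combinations of the nearest integers to the [T w_i] modulo
   [T] gives a short [k] with [||<k,w>||] small. *)

From Stdlib Require Import Reals Lra Lia ZArith List Wf_nat Classical.
Open Scope R_scope.

Lemma distZ_le_dist (x : R) (m : Z) : distZ x <= Rabs (x - IZR m).
Proof.
  unfold distZ. destruct (base_Int_part x) as [Hlo Hhi].
  destruct (Z_le_gt_dec m (Int_part x)) as [Hm|Hm].
  - apply IZR_le in Hm. eapply Rle_trans; [apply Rmin_l|].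
    rewrite Rabs_right; lra.
  - assert (Hm' : (Int_part x + 1 <= m)%Z) by lia. apply IZR_le in Hm'.
    rewrite plus_IZR in Hm'. eapply Rle_trans; [apply Rmin_r|].
    rewrite Rabs_left1; lra.
Qed.

Definition nearest_int (x : R) : Z :=
  if Rle_dec (x - IZR (Int_part x)) (IZR (Int_part x) + 1 - x)
  then Int_part x else (Int_part x + 1)%Z.

Lemma distZ_nearest_int (x : R) : distZ x = Rabs (x - IZR (nearest_int x)).
Proof.
  unfold distZ, nearest_int. destruct (base_Int_part x) as [Hlo Hhi].
  destruct (Rle_dec _ _).
  - rewrite Rmin_left by lra. rewrite Rabs_right; lra.
  - rewrite Rmin_right by lra. rewrite plus_IZR, Rabs_left1; lra.
Qed.

Lemma distZ_ge0 (x : R) : 0 <= distZ x.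
Proof. rewrite distZ_nearest_int. apply Rabs_pos. Qed.

Lemma distZ_le_half (x : R) : distZ x <= / 2.
Proof.
  unfold distZ. destruct (base_Int_part x).
  destruct (Rle_dec (x - IZR (Int_part x)) (IZR (Int_part x) + 1 - x)).
  - rewrite Rmin_left; lra.
  - rewrite Rmin_right; lra.
Qed.

Lemma distZ_le_abs (x : R) : distZ x <= Rabs x.
Proof. rewrite <- (Rminus_0_r x) at 2. apply (distZ_le_dist x 0). Qed.

Lemma distZ_0 : distZ 0 = 0.
Proof. apply Rle_antisym; [rewrite <- Rabs_R0 at 2; apply distZ_le_abs|apply distZ_ge0]. Qed.

Lemma distZ_addZ (x : R) (m : Z) : distZ (x + IZR m) = distZ x.
Proof.
  apply Rle_antisym.
  - rewrite (distZ_nearest_int x).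
    replace (x - IZR (nearest_int x)) with (x + IZR m - IZR (nearest_int x + m))
      by (rewrite plus_IZR; ring).
    apply distZ_le_dist.
  - rewrite (distZ_nearest_int (x + IZR m)).
    replace (x + IZR m - IZR (nearest_int (x + IZR m)))
      with (x - IZR (nearest_int (x + IZR m) - m)) by (rewrite minus_IZR; ring).
    apply distZ_le_dist.
Qed.

Lemma distZ_opp (x : R) : distZ (- x) = distZ x.
Proof.
  assert (Hle : forall y, distZ (- y) <= distZ y).
  { intro y. rewrite (distZ_nearest_int y), <- Rabs_Ropp.
    replace (- (y - IZR (nearest_int y))) with (- y - IZR (- nearest_int y))
      by (rewrite opp_IZR; ring).
    apply distZ_le_dist. }
  apply Rle_antisym; [apply Hle|]. rewrite <- (Ropp_involutive x) at 1. apply Hle.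
Qed.

Lemma distZ_add (x y : R) : distZ (x + y) <= distZ x + distZ y.
Proof.
  rewrite (distZ_nearest_int x), (distZ_nearest_int y).
  eapply Rle_trans; [apply (distZ_le_dist _ (nearest_int x + nearest_int y))|].
  rewrite plus_IZR. eapply Rle_trans; [|apply Rabs_triang]. right. f_equal. ring.
Qed.

Lemma distZ_mulZ (z : Z) (x : R) : distZ (IZR z * x) <= Rabs (IZR z) * distZ x.
Proof.
  rewrite (distZ_nearest_int x), <- Rabs_mult.
  replace (IZR z * (x - IZR (nearest_int x))) with (IZR z * x - IZR (z * nearest_int x))
    by (rewrite mult_IZR; ring).
  apply distZ_le_dist.
Qed.

Lemma distZ_mulZ_abs (z : Z) (x : R) : distZ (IZR (Z.abs z) * x) = distZ (IZR z * x).
Proof.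
  destruct (Z_le_gt_dec 0 z).
  - now rewrite Z.abs_eq by lia.
  - rewrite Z.abs_neq, opp_IZR, <- distZ_opp by lia. f_equal. ring.
Qed.

Lemma distZ_abs_small (x : R) : Rabs x <= / 2 -> distZ x = Rabs x.
Proof.
  intro Hx. apply Rle_antisym; [apply distZ_le_abs|].
  rewrite (distZ_nearest_int x). destruct (Z.eq_dec (nearest_int x) 0) as [E|E].
  - rewrite E, Rminus_0_r. lra.
  - assert (1 <= Rabs (IZR (nearest_int x))) by (rewrite Rabs_Zabs; apply IZR_le; lia).
    pose proof (Rabs_triang_inv (IZR (nearest_int x)) x).
    rewrite Rabs_minus_sym. lra.
Qed.

Lemma distZ_eq0 (x : R) : distZ x = 0 -> x = IZR (nearest_int x).
Proof.
  rewrite distZ_nearest_int. intro H.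
  destruct (Rcase_abs (x - IZR (nearest_int x))).
  - rewrite Rabs_left in H; lra.
  - rewrite Rabs_right in H; lra.
Qed.

Lemma distZ_mul_nat (T : nat) (x : R) :
  INR T * distZ x <= / 2 -> distZ (INR T * x) = INR T * distZ x.
Proof.
  rewrite (distZ_nearest_int x). intro H.
  replace (INR T * x)
    with (INR T * (x - IZR (nearest_int x)) + IZR (Z.of_nat T * nearest_int x))
    by (rewrite mult_IZR, <- INR_IZR_INZ; ring).
  rewrite distZ_addZ, distZ_abs_small; rewrite Rabs_mult, Rabs_right by (apply Rle_ge, pos_INR);
    [reflexivity|exact H].
Qed.

Lemma vmax_ge (n : nat) (f : nat -> R) (i : nat) : (i < n)%nat -> f i <= vmax n f.
Proof.
  induction n; intro Hi; [lia|]. simpl.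
  destruct (Nat.eq_dec i n) as [->|Hne]; [apply Rmax_r|].
  eapply Rle_trans; [apply IHn; lia|apply Rmax_l].
Qed.

Lemma vmax_ge0 (n : nat) (f : nat -> R) : 0 <= vmax n f.
Proof. induction n; simpl; [lra|]. eapply Rle_trans; [apply IHn|apply Rmax_l]. Qed.

Lemma vmax_le (n : nat) (f : nat -> R) (b : R) :
  0 <= b -> (forall i, (i < n)%nat -> f i <= b) -> vmax n f <= b.
Proof.
  intro Hb. induction n; intro H; simpl; [lra|].
  apply Rmax_lub; [apply IHn; intros; apply H|apply H]; lia.
Qed.

Lemma vmax_lt (n : nat) (f : nat -> R) (b : R) :
  0 < b -> (forall i, (i < n)%nat -> f i < b) -> vmax n f < b.
Proof.
  intro Hb. induction n; intro H; simpl; [lra|].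
  apply Rmax_lub_lt; [apply IHn; intros; apply H|apply H]; lia.
Qed.

Lemma vsum_ext (n : nat) (f g : nat -> R) :
  (forall i, (i < n)%nat -> f i = g i) -> vsum n f = vsum n g.
Proof.
  induction n; intro H; simpl; [reflexivity|].
  rewrite IHn, H by (try intros; try apply H; lia). reflexivity.
Qed.

Lemma vsum_le (n : nat) (f : nat -> R) (b : R) :
  (forall i, (i < n)%nat -> f i <= b) -> vsum n f <= INR n * b.
Proof.
  induction n; intro H; cbn [vsum]; [simpl; lra|].
  rewrite S_INR. assert (vsum n f <= INR n * b) by (apply IHn; intros; apply H; lia).
  assert (f n <= b) by (apply H; lia). lra.
Qed.

Lemma vsum_scal (n : nat) (f : nat -> R) (c : R) : c * vsum n f = vsum n (fun i => c * f i).
Proof. induction n; simpl; [ring|]. rewrite <- IHn. ring. Qed.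

Lemma vsum_plus (n : nat) (f g : nat -> R) : vsum n f + vsum n g = vsum n (fun i => f i + g i).
Proof. induction n; simpl; [ring|]. rewrite <- IHn. ring. Qed.

Lemma vsum_split (n : nat) (f : nat -> R) (j : nat) : (j < n)%nat ->
  vsum n f = vsum n (fun i => if Nat.eqb i j then 0 else f i) + f j.
Proof.
  induction n; intro Hj; [lia|]. simpl.
  destruct (Nat.eq_dec j n) as [->|Hne].
  - rewrite Nat.eqb_refl, (vsum_ext n (fun i => if Nat.eqb i n then 0 else f i) f); [ring|].
    intros i Hi. destruct (Nat.eqb_spec i n); [lia|reflexivity].
  - rewrite (IHn ltac:(lia)). destruct (Nat.eqb_spec n j); [lia|]. ring.
Qed.

Lemma vsum_eq0 (n : nat) (f : nat -> R) : (forall i, (i < n)%nat -> f i = 0) -> vsum n f = 0.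
Proof.
  induction n; intro H; simpl; [reflexivity|].
  rewrite IHn, H by (try intros; try apply H; lia). ring.
Qed.

Lemma Rabs_vsum (n : nat) (f : nat -> R) : Rabs (vsum n f) <= vsum n (fun i => Rabs (f i)).
Proof.
  induction n; simpl; [rewrite Rabs_R0; lra|].
  eapply Rle_trans; [apply Rabs_triang|]. lra.
Qed.

Lemma distZ_vsum (n : nat) (f : nat -> R) : distZ (vsum n f) <= vsum n (fun i => distZ (f i)).
Proof.
  induction n; simpl; [rewrite distZ_0; lra|].
  eapply Rle_trans; [apply distZ_add|]. lra.
Qed.

Fixpoint zsum (d : nat) (f : nat -> Z) : Z :=
  match d with O => 0%Z | S m => (zsum m f + f m)%Z end.

Lemma IZR_zsum (d : nat) (f : nat -> Z) : IZR (zsum d f) = vsum d (fun i => IZR (f i)).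
Proof. induction d; simpl; [reflexivity|]. rewrite plus_IZR, IHd. reflexivity. Qed.

Lemma zsum_ext (d : nat) (f g : nat -> Z) :
  (forall i, (i < d)%nat -> f i = g i) -> zsum d f = zsum d g.
Proof.
  induction d; intro H; simpl; [reflexivity|].
  rewrite IHd, H by (try intros; try apply H; lia). reflexivity.
Qed.

Lemma zsum_sub (d : nat) (f g : nat -> Z) :
  (zsum d f - zsum d g)%Z = zsum d (fun i => f i - g i)%Z.
Proof. induction d; simpl; [reflexivity|]. rewrite <- IHd. ring. Qed.

Lemma distZ_le_vdistZ (n : nat) (v : nat -> R) (i : nat) :
  (i < n)%nat -> distZ (v i) <= vdistZ n v.
Proof. apply (vmax_ge n (fun i => distZ (v i))). Qed.

Lemma vdistZ_ge0 (n : nat) (v : nat -> R) : 0 <= vdistZ n v.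
Proof. apply vmax_ge0. Qed.

Lemma Rabs_le_znorm (n : nat) (k : nat -> Z) (i : nat) :
  (i < n)%nat -> Rabs (IZR (k i)) <= znorm n k.
Proof. apply (vmax_ge n (fun i => Rabs (IZR (k i)))). Qed.

Lemma znorm_ge1 (n : nat) (k : nat -> Z) : znonzero n k -> 1 <= znorm n k.
Proof.
  intros [i [Hi Hk]]. eapply Rle_trans; [|apply (Rabs_le_znorm n k i Hi)].
  rewrite Rabs_Zabs. apply IZR_le. lia.
Qed.

Lemma zdot_vscale (n : nat) (k : nat -> Z) (T : nat) (w : nat -> R) :
  zdot n k (vscale T w) = INR T * zdot n k w.
Proof. unfold zdot, vscale. rewrite vsum_scal. apply vsum_ext. intros; ring. Qed.

Lemma distZ_zdot_le (n : nat) (k : nat -> Z) (v : nat -> R) :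
  distZ (zdot n k v) <= INR n * (znorm n k * vdistZ n v).
Proof.
  eapply Rle_trans; [apply distZ_vsum|]. apply vsum_le. intros i Hi.
  eapply Rle_trans; [apply distZ_mulZ|].
  apply Rmult_le_compat; auto using Rabs_pos, distZ_ge0, Rabs_le_znorm, distZ_le_vdistZ.
Qed.

Lemma least_nat (P : nat -> Prop) :
  (exists m, P m) -> exists m, P m /\ forall m', P m' -> (m <= m')%nat.
Proof.
  intro HP. destruct (dec_inh_nat_subset_has_unique_least_element P (fun m => classic (P m)) HP)
    as [m [[Hm Hmin] _]].
  exists m. split; assumption.
Qed.

Lemma pigeonhole (M : nat) (f : nat -> nat) :
  (forall x, (x <= M)%nat -> (f x < M)%nat) -> exists x y, (x < y <= M)%nat /\ f x = f y.
Proof.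
  intro Hf. apply NNPP. intro Hinj.
  assert (Hnd : NoDup (map f (seq 0 (S M)))).
  { apply NoDup_map_NoDup_ForallPairs; [|apply seq_NoDup].
    intros x y Hx Hy E. apply in_seq in Hx, Hy.
    destruct (Nat.lt_total x y) as [L|[L|L]]; [|exact L|]; exfalso; apply Hinj.
    - exists x, y. split; [lia|exact E].
    - exists y, x. split; [lia|congruence]. }
  apply NoDup_incl_length with (l' := seq 0 M) in Hnd.
  - rewrite length_map, !length_seq in Hnd. lia.
  - intros y Hy. apply in_map_iff in Hy as [x [<- Hx]]. apply in_seq in Hx.
    apply in_seq. specialize (Hf x). lia.
Qed.

Definition digit (B c i : nat) : nat := (c / B ^ i) mod B.

Fixpoint from_digits (B d : nat) (b : nat -> nat) : nat :=
  match d with O => O | S d' => (from_digits B d' b + b d' * B ^ d')%nat end.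

Lemma digit_lt (B c i : nat) : (0 < B)%nat -> (digit B c i < B)%nat.
Proof. intro. apply Nat.mod_upper_bound. lia. Qed.

Lemma from_digits_ext (B d : nat) (b b' : nat -> nat) :
  (forall i, (i < d)%nat -> b i = b' i) -> from_digits B d b = from_digits B d b'.
Proof.
  induction d; intro H; simpl; [reflexivity|].
  rewrite IHd, H by (try intros; try apply H; lia). reflexivity.
Qed.

Lemma from_digits_digit (B d c : nat) : from_digits B d (digit B c) = (c mod B ^ d)%nat.
Proof.
  induction d as [|d IH]; simpl.
  - reflexivity.
  - rewrite IH, (Nat.mul_comm B), Nat.Div0.mod_mul_r. unfold digit. ring.
Qed.

Lemma from_digits_lt (B d : nat) (b : nat -> nat) :
  (forall i, (i < d)%nat -> (b i < B)%nat) -> (from_digits B d b < B ^ d)%nat.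
Proof.
  induction d; intro H; simpl; [lia|].
  assert (from_digits B d b < B ^ d)%nat by (apply IHd; intros; apply H; lia).
  assert (b d < B)%nat by (apply H; lia). nia.
Qed.

Lemma from_digits_inj (B d : nat) (b b' : nat -> nat) :
  (forall i, (i < d)%nat -> (b i < B)%nat) -> (forall i, (i < d)%nat -> (b' i < B)%nat) ->
  from_digits B d b = from_digits B d b' -> forall i, (i < d)%nat -> b i = b' i.
Proof.
  induction d; intros Hb Hb' E i Hi; [lia|]. simpl in E.
  assert (L : (from_digits B d b < B ^ d)%nat) by (apply from_digits_lt; intros; apply Hb; lia).
  assert (L' : (from_digits B d b' < B ^ d)%nat) by (apply from_digits_lt; intros; apply Hb'; lia).
  assert (Htop : b d = b' d).
  { apply (f_equal (fun x => x / B ^ d)%nat) in E.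
    rewrite !Nat.div_add, !Nat.div_small in E by lia. exact E. }
  destruct (Nat.eq_dec i d) as [->|Hne]; [exact Htop|].
  rewrite Htop in E. apply IHd; try (intros; apply Hb || apply Hb'; lia); lia.
Qed.

Lemma digits_differ (B d c1 c2 : nat) :
  (c1 < B ^ d)%nat -> (c2 < B ^ d)%nat -> c1 <> c2 ->
  exists i, (i < d)%nat /\ digit B c1 i <> digit B c2 i.
Proof.
  intros H1 H2 Hne. apply NNPP. intro Hsame. apply Hne.
  rewrite <- (Nat.mod_small c1 (B ^ d)), <- (Nat.mod_small c2 (B ^ d)) by assumption.
  rewrite <- !from_digits_digit. apply from_digits_ext.
  intros i Hi. apply NNPP. intro. apply Hsame. eauto.
Qed.

Lemma nat_root (n T : nat) : (1 <= n)%nat -> (1 <= T)%nat ->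
  exists H, (1 <= H)%nat /\ (H ^ n <= T < S H ^ n)%nat.
Proof.
  intros Hn HT.
  destruct (least_nat (fun j => (T < S j ^ n)%nat)) as [j [Hj Hmin]].
  { exists T. destruct n; [lia|]. simpl. pose proof (Nat.pow_lower_bound (S T) n ltac:(lia)). nia. }
  destruct j as [|j]; [rewrite Nat.pow_1_l in Hj; lia|].
  exists (S j). split; [lia|]. split; [|exact Hj].
  destruct (Nat.le_gt_cases (S j ^ n) T) as [L|L]; [exact L|]. specialize (Hmin j L). lia.
Qed.

Lemma nat_floor (x : R) : 1 <= x -> exists N, (1 <= N)%nat /\ INR N <= x < INR N + 1.
Proof.
  intro Hx. destruct (base_Int_part x) as [Hlo Hhi].
  assert (H0 : (0 < Int_part x)%Z) by (apply lt_IZR; lra).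
  exists (Z.to_nat (Int_part x)). rewrite INR_IZR_INZ, Z2Nat.id by lia.
  split; [lia|lra].
Qed.

(* Dirichlet's box principle: split [0,1)^d into q^d boxes and compare [T v] for T = 0..q^d. *)
Lemma dirichlet (d q : nat) (v : nat -> R) : (1 <= q)%nat ->
  exists T, (1 <= T <= q ^ d)%nat /\ forall i, (i < d)%nat -> distZ (INR T * v i) < / INR q.
Proof.
  intro Hq. assert (Hq' : 0 < INR q) by (apply lt_0_INR; lia).
  set (fr := fun T i => frac_part (INR T * v i)).
  assert (Hfr : forall T i, 0 <= INR q * fr T i < INR q).
  { intros T i. unfold fr. destruct (base_fp (INR T * v i)). split; [nra|].
    rewrite <- (Rmult_1_r (INR q)) at 2. apply Rmult_lt_compat_l; lra. }
  assert (Hbox : forall T i, (0 <= Int_part (INR q * fr T i) < Z.of_nat q)%Z).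
  { intros T i. destruct (Hfr T i). destruct (base_Int_part (INR q * fr T i)).
    assert (-1 < Int_part (INR q * fr T i))%Z by (apply lt_IZR; lra).
    assert (Int_part (INR q * fr T i) < Z.of_nat q)%Z by (apply lt_IZR; rewrite <- INR_IZR_INZ; lra).
    lia. }
  set (box := fun T i => Z.to_nat (Int_part (INR q * fr T i))).
  assert (Hbq : forall T i, (box T i < q)%nat) by (intros T i; specialize (Hbox T i); unfold box; lia).
  destruct (pigeonhole (q ^ d) (fun T => from_digits q d (box T))) as [T1 [T2 [HT E]]].
  { intros T _. apply from_digits_lt. intros; apply Hbq. }
  exists (T2 - T1)%nat. split; [lia|]. intros i Hi.
  pose proof (from_digits_inj q d (box T1) (box T2) (fun i _ => Hbq T1 i) (fun i _ => Hbq T2 i) E i Hi)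
    as Hsame.
  assert (Hclose : Rabs (fr T2 i - fr T1 i) < / INR q).
  { destruct (base_Int_part (INR q * fr T1 i)), (base_Int_part (INR q * fr T2 i)).
    assert (EI : Int_part (INR q * fr T1 i) = Int_part (INR q * fr T2 i))
      by (unfold box in Hsame; pose proof (Hbox T1 i); pose proof (Hbox T2 i); lia).
    rewrite EI in *.
    apply (Rmult_lt_reg_l (INR q)); [lra|]. rewrite Rinv_r by lra.
    rewrite <- (Rabs_right (INR q)) at 1 by lra. rewrite <- Rabs_mult. apply Rabs_def1; lra. }
  unfold fr, frac_part in Hclose. rewrite minus_INR by lia.
  replace ((INR T2 - INR T1) * v i)
    with (INR T2 * v i - IZR (Int_part (INR T2 * v i)) - (INR T1 * v i - IZR (Int_part (INR T1 * v i)))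
          + IZR (Int_part (INR T2 * v i) - Int_part (INR T1 * v i))) by (rewrite minus_IZR; ring).
  rewrite distZ_addZ. eapply Rle_lt_trans; [apply distZ_le_abs|exact Hclose].
Qed.

Lemma dirichlet_vdistZ (n q : nat) (w : nat -> R) : (1 <= q)%nat ->
  exists T, (1 <= T <= q ^ n)%nat /\ vdistZ n (vscale T w) < / INR q.
Proof.
  intro Hq. destruct (dirichlet n q w Hq) as [T [HT Hd]]. exists T. split; [exact HT|].
  apply vmax_lt; [apply Rinv_0_lt_compat, lt_0_INR; lia|exact Hd].
Qed.

Lemma dirichlet_except (n q j : nat) (w : nat -> R) : (j < n)%nat -> (1 <= q)%nat ->
  exists T, (1 <= T <= q ^ (n - 1))%nat /\
    forall i, (i < n)%nat -> i <> j -> distZ (INR T * w i) < / INR q.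
Proof.
  intros Hj Hq.
  destruct (dirichlet (n - 1) q (fun i => w (if Nat.ltb i j then i else S i)) Hq) as [T [HT Hd]].
  exists T. split; [exact HT|]. intros i Hi Hij.
  destruct (Nat.ltb_spec i j) as [L|L].
  - specialize (Hd i ltac:(lia)). simpl in Hd. destruct (Nat.ltb_spec i j); [exact Hd|lia].
  - specialize (Hd (i - 1)%nat ltac:(lia)). simpl in Hd.
    destruct (Nat.ltb_spec (i - 1) j); [lia|]. now replace (S (i - 1)) with i in Hd by lia.
Qed.

Section Periods.
Variable n : nat.
Variable w : nat -> R.
Local Notation vd T := (vdistZ n (vscale T w)).

Lemma period_unique i a b : Period n w i a -> Period n w i b -> a = b.
Proof.
  intro Ha. revert b. induction Ha as [|i Ti T HP IH H1 H2 H3]; intros b Hb.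
  - now inversion Hb.
  - inversion Hb as [|i' Ti' T' HP' H1' H2' H3']; subst.
    specialize (IH _ HP'). subst Ti'.
    destruct (Nat.lt_total T b) as [L|[L|L]]; [|exact L|]; exfalso.
    + exact (H3' T H1 L H2).
    + exact (H3 b H1' L H2').
Qed.

Lemma period_ge1 i Ti : Period n w i Ti -> (1 <= Ti)%nat.
Proof. intro H; inversion H; lia. Qed.

Lemma period_succ_gap i Ti Ti1 : Period n w i Ti -> Period n w (S i) Ti1 ->
  forall T, (1 <= T)%nat -> (T < Ti1)%nat -> vd Ti <= vd T.
Proof.
  intros HP HP1 T H1 H2. inversion HP1 as [|i' Ti' T' HP' H1' H2' H3']; subst.
  rewrite (period_unique _ _ _ HP HP'). apply Rnot_lt_le. exact (H3' T H1 H2).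
Qed.

Lemma period_succ_vdistZ_lt i Ti Ti1 : Period n w i Ti -> Period n w (S i) Ti1 -> vd Ti1 < vd Ti.
Proof.
  intros HP HP1. inversion HP1 as [|i' Ti' T' HP' H1' H2' H3']; subst.
  rewrite (period_unique _ _ _ HP HP'). exact H2'.
Qed.

Lemma period_vdistZ_lt i Ti : Period n w i Ti ->
  forall T, (1 <= T)%nat -> (T < Ti)%nat -> vd Ti < vd T.
Proof.
  intro HP. induction HP as [|i Ti T HP IH H1 H2 H3]; intros T' HT1 HT2; [lia|].
  pose proof (H3 T' HT1 HT2). lra.
Qed.

Lemma period_lt_succ i Ti Ti1 : Period n w i Ti -> Period n w (S i) Ti1 -> (Ti < Ti1)%nat.
Proof.
  intros HP HP1. pose proof (period_succ_vdistZ_lt _ _ _ HP HP1).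
  destruct (Nat.lt_total Ti Ti1) as [L|[L|L]]; [exact L|subst; lra|].
  pose proof (period_vdistZ_lt _ _ HP Ti1 (period_ge1 _ _ HP1) L). lra.
Qed.

Lemma period_ge i Ti : Period n w i Ti -> (i + 1 <= Ti)%nat.
Proof.
  intro HP. induction HP as [|i Ti T HP IH H1 H2 H3]; [lia|].
  assert (Ti < T)%nat; [|lia].
  apply (period_lt_succ i); [exact HP|]. econstructor; eassumption.
Qed.

Hypothesis vdistZ_pos : forall T, (1 <= T)%nat -> 0 < vd T.

Lemma period_exists i : exists Ti, Period n w i Ti.
Proof.
  induction i as [|i [Ti HTi]]; [exists 1%nat; constructor|].
  pose proof (vdistZ_pos Ti (period_ge1 _ _ HTi)) as Hd.
  destruct (INR_unbounded (/ vd Ti)) as [q Hq].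
  assert (Hq0 : 0 < INR q) by (pose proof (Rinv_0_lt_compat _ Hd); lra).
  destruct (dirichlet_vdistZ n q w) as [T [HT HTq]]; [destruct q; [simpl in Hq0; lra|lia]|].
  assert (Hlt : vd T < vd Ti).
  { eapply Rlt_trans; [exact HTq|]. rewrite <- (Rinv_inv (vd Ti)).
    apply Rinv_lt_contravar; [apply Rmult_lt_0_compat; [apply Rinv_0_lt_compat|]|]; lra. }
  destruct (least_nat (fun T => (1 <= T)%nat /\ vd T < vd Ti)) as [T0 [[H1 H2] Hmin]].
  { exists T. split; [lia|exact Hlt]. }
  exists T0. econstructor; [exact HTi|exact H1|exact H2|].
  intros T' HT1 HT2 Hlt'. specialize (Hmin T' (conj HT1 Hlt')). lia.
Qed.

Lemma period_bracket N : (1 <= N)%nat ->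
  exists i Ti Ti1, Period n w i Ti /\ Period n w (S i) Ti1 /\ (Ti <= N < Ti1)%nat.
Proof.
  intro HN.
  destruct (least_nat (fun j => exists Tj, Period n w j Tj /\ (N < Tj)%nat))
    as [j [[Tj [HPj HNj]] Hmin]].
  { destruct (period_exists N) as [TN HTN]. exists N, TN. split; [exact HTN|].
    pose proof (period_ge _ _ HTN). lia. }
  destruct j as [|i]; [inversion HPj; lia|].
  destruct (period_exists i) as [Ti HTi]. exists i, Ti, Tj. repeat split; auto.
  destruct (Nat.le_gt_cases Ti N) as [L|L]; [exact L|].
  assert (S i <= i)%nat by (apply Hmin; exists Ti; auto). lia.
Qed.

Hypothesis n_pos : (1 <= n)%nat.

Lemma period_succ_bound i Ti Ti1 : Period n w i Ti -> Period n w (S i) Ti1 ->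
  INR Ti1 * vd Ti ^ n <= 2 ^ n.
Proof.
  intros HP HP1.
  pose proof (period_lt_succ _ _ _ HP HP1). pose proof (period_ge1 _ _ HP).
  destruct (nat_root n (Ti1 - 1) n_pos ltac:(lia)) as [q [Hq [Hqlo Hqhi]]].
  destruct (dirichlet_vdistZ n q w Hq) as [T [HT HTq]].
  pose proof (period_succ_gap _ _ _ HP HP1 T ltac:(lia) ltac:(lia)) as Hgap.
  assert (Hq' : 1 <= INR q) by (apply (le_INR 1); lia).
  assert (Hd : vd Ti ^ n <= (/ INR q) ^ n) by (apply pow_incr; split; [apply vdistZ_ge0|lra]).
  assert (HTi1 : INR Ti1 <= (2 * INR q) ^ n).
  { apply Rle_trans with (INR (S q ^ n)); [apply le_INR; lia|].
    rewrite pow_INR, S_INR. apply pow_incr. lra. }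
  apply Rle_trans with ((2 * INR q) ^ n * (/ INR q) ^ n).
  - apply Rmult_le_compat; auto using pos_INR, pow_le, vdistZ_ge0.
  - rewrite <- Rpow_mult_distr. right. f_equal. field. lra.
Qed.

End Periods.

Lemma Rpower_pos (x y : R) : 0 < Rpower x y.
Proof. apply exp_pos. Qed.

Lemma Rpower_pow_nat (x a : R) (m : nat) : Rpower x a ^ m = Rpower x (a * INR m).
Proof. rewrite <- Rpower_pow by apply Rpower_pos. apply Rpower_mult. Qed.

Lemma ln_le (x y : R) : 0 < x -> x <= y -> ln x <= ln y.
Proof. intros Hx [L|<-]; [left; apply ln_increasing|right]; auto. Qed.

Lemma ln_le_inv (x y : R) : 0 < x -> 0 < y -> ln x <= ln y -> x <= y.
Proof. intros Hx Hy [L|E]; [left; apply ln_lt_inv|right; apply ln_inv]; auto. Qed.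

Lemma ln_mul_Rpower (C x e : R) : 0 < C -> ln (C * Rpower x e) = ln C + e * ln x.
Proof. intro HC. rewrite ln_mult, ln_Rpower by auto using Rpower_pos. reflexivity. Qed.

Lemma Omega_low_per (n : nat) (s : R) (w : nat -> R) :
  (1 <= n)%nat -> Omega_low n s w -> Omega_per n s w.
Proof.
  intros Hn [C [HC Hlow]].
  assert (Hn' : 0 < INR n) by (apply lt_0_INR; lia).
  exists ((2 / C) ^ n). split; [apply pow_lt, Rdiv_lt_0_compat; lra|].
  intros i Ti Ti1 HP HP1.
  set (δ := vdistZ n (vscale Ti w)).
  set (P := Rpower (INR Ti) (1 + s)).
  assert (HP0 : 0 < P) by apply Rpower_pos.
  assert (Hδ : C * Rpower (INR Ti) (- (1 + s) / INR n) <= δ)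
    by exact (Rge_le _ _ (Hlow Ti (period_ge1 n w i Ti HP))).
  assert (Hδn : C ^ n * / P <= δ ^ n).
  { replace (/ P) with (Rpower (INR Ti) (- (1 + s) / INR n) ^ n)
      by (unfold P; rewrite Rpower_pow_nat, <- Rpower_Ropp; f_equal; field; lra).
    rewrite <- Rpow_mult_distr. apply pow_incr. split; [|exact Hδ].
    left. apply Rmult_lt_0_compat; [lra|apply Rpower_pos]. }
  assert (Hgrowth : INR Ti1 * (C ^ n * / P) <= 2 ^ n).
  { eapply Rle_trans; [|exact (period_succ_bound n w Hn i Ti Ti1 HP HP1)].
    apply Rmult_le_compat_l; [apply pos_INR|exact Hδn]. }
  assert (HCn : 0 < C ^ n) by (apply pow_lt; lra).
  apply (Rmult_le_reg_r (C ^ n * / P)); [apply Rmult_lt_0_compat; [lra|apply Rinv_0_lt_compat; lra]|].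
  replace ((2 / C) ^ n * P * (C ^ n * / P)) with (2 ^ n)
    by (unfold Rdiv; rewrite Rpow_mult_distr, pow_inv; field; split; lra).
  exact Hgrowth.
Qed.

(* Eliminating [w_j] through the relation, Dirichlet in the other [n - 1] coordinates gives all [n]. *)
Lemma relation_approx (n : nat) (w : nat -> R) (k : nat -> Z) (m : Z) (j q : nat) :
  (j < n)%nat -> k j <> 0%Z -> zdot n k w = IZR m -> (1 <= q)%nat ->
  exists T, (1 <= T)%nat /\ INR T <= znorm n k * INR q ^ (n - 1) /\
    vdistZ n (vscale T w) <= INR n * znorm n k / INR q.
Proof.
  intros Hj Hkj Hrel Hq.
  destruct (dirichlet_except n q j w Hj Hq) as [T [HT Hoff]].
  assert (Hq' : 0 < INR q) by (apply lt_0_INR; lia).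
  assert (Hn : 1 <= INR n) by (apply (le_INR 1); lia).
  pose proof (Rabs_le_znorm n k j Hj) as Hkj'. rewrite Rabs_Zabs in Hkj'.
  set (K := znorm n k) in *.
  assert (HK : 0 <= K / INR q).
  { apply Rmult_le_pos; [|left; apply Rinv_0_lt_compat; lra].
    eapply Rle_trans; [apply IZR_le, Z.abs_nonneg|exact Hkj']. }
  assert (Hother : forall i, (i < n)%nat -> i <> j -> distZ (IZR (k i) * (INR T * w i)) <= K / INR q).
  { intros i Hi Hij. eapply Rle_trans; [apply distZ_mulZ|]. unfold Rdiv.
    apply Rmult_le_compat; [apply Rabs_pos|apply distZ_ge0|apply Rabs_le_znorm, Hi|].
    left. apply Hoff; assumption. }
  exists (Z.abs_nat (k j) * T)%nat. split; [lia|].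
  rewrite mult_INR, INR_IZR_INZ, Nat2Z.inj_abs_nat. split.
  { apply Rmult_le_compat; [apply IZR_le, Z.abs_nonneg|apply pos_INR|exact Hkj'|].
    rewrite <- pow_INR. apply le_INR; lia. }
  apply vmax_le; [unfold Rdiv; rewrite Rmult_assoc; apply Rmult_le_pos; [lra|exact HK]|].
  intros i Hi. unfold vscale. rewrite mult_INR, INR_IZR_INZ, Nat2Z.inj_abs_nat, Rmult_assoc.
  destruct (Nat.eq_dec i j) as [->|Hij].
  - rewrite distZ_mulZ_abs.
    set (Soff := vsum n (fun i => if Nat.eqb i j then 0 else IZR (k i) * (INR T * w i))).
    assert (E : IZR (k j) * (INR T * w j) = - Soff + IZR (Z.of_nat T * m)).
    { rewrite mult_IZR, <- INR_IZR_INZ, <- Hrel, <- zdot_vscale. unfold zdot at 1.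
      rewrite (vsum_split n _ j Hj). unfold Soff, vscale. ring. }
    rewrite E, distZ_addZ, distZ_opp. unfold Rdiv. rewrite Rmult_assoc.
    eapply Rle_trans; [apply distZ_vsum|]. apply vsum_le. intros i Hi'.
    destruct (Nat.eqb_spec i j) as [_|Hij']; [rewrite distZ_0; exact HK|].
    exact (Hother i Hi' Hij').
  - eapply Rle_trans; [apply distZ_mulZ|]. rewrite Rabs_Zabs, Z.abs_idemp.
    apply Rle_trans with (K / INR q); [|unfold Rdiv; rewrite Rmult_assoc; nra].
    unfold Rdiv. apply Rmult_le_compat; [apply IZR_le, Z.abs_nonneg|apply distZ_ge0|exact Hkj'|].
    left. apply Hoff; assumption.
Qed.

(* The approximations of [relation_approx] are too good once [q] is large, because
   [1 - (n - 1) (1 + s) / n > 0]. *)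
Lemma Omega_low_no_relation (n : nat) (s : R) (w : nat -> R) :
  (1 <= n)%nat -> 0 <= s -> (INR n - 1) * (1 + s) < INR n -> Omega_low n s w ->
  forall k, znonzero n k -> forall m, zdot n k w <> IZR m.
Proof.
  intros Hn Hs Hsn [C [HC Hlow]] k Hk m Hrel.
  pose proof (znorm_ge1 n k Hk) as HK. set (K := znorm n k) in *.
  destruct Hk as [j [Hj Hkj]].
  assert (Hn' : 1 <= INR n) by (apply (le_INR 1); lia).
  set (a := (1 + s) / INR n).
  set (e := 1 - a * (INR n - 1)).
  assert (Ha : 0 <= a) by (apply Rmult_le_pos; [|left; apply Rinv_0_lt_compat]; lra).
  assert (He : 0 < e).
  { unfold e, a. apply (Rmult_lt_reg_r (INR n)); [lra|]. field_simplify; lra. }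
  set (M := ln (INR n) + (1 + a) * ln K - ln C).
  destruct (INR_unbounded (exp (M / e))) as [q Hq].
  pose proof (exp_pos (M / e)) as Hexp.
  assert (Hq1 : (1 <= q)%nat) by (destruct q; [simpl in Hq; lra|lia]).
  assert (Hq' : 0 < INR q) by lra.
  destruct (relation_approx n w k m j q Hj Hkj Hrel Hq1) as [T [HT1 [HTK HTd]]].
  fold K in HTK, HTd.
  assert (HT : 0 < INR T) by (apply lt_0_INR; lia).
  assert (Llow : ln C - a * ln (INR T) <= ln (INR n) + ln K - ln (INR q)).
  { replace (ln C - a * ln (INR T)) with (ln (C * Rpower (INR T) (- (1 + s) / INR n)))
      by (rewrite ln_mul_Rpower by lra; unfold a; field; lra).
    replace (ln (INR n) + ln K - ln (INR q)) with (ln (INR n * K / INR q))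
      by (unfold Rdiv; rewrite !ln_mult, ln_Rinv by (auto using Rinv_0_lt_compat; nra); ring).
    apply ln_le; [apply Rmult_lt_0_compat; [lra|apply Rpower_pos]|].
    eapply Rle_trans; [apply Rge_le, Hlow, HT1|exact HTd]. }
  assert (LT : ln (INR T) <= ln K + (INR n - 1) * ln (INR q)).
  { replace (INR n - 1) with (INR (n - 1)) by (rewrite minus_INR by lia; simpl; ring).
    rewrite <- ln_pow, <- ln_mult by (auto using pow_lt; lra). apply ln_le; lra. }
  assert (Lq : M / e < ln (INR q)) by (rewrite <- (ln_exp (M / e)); apply ln_increasing; lra).
  assert (LaT : a * ln (INR T) <= a * (ln K + (INR n - 1) * ln (INR q)))
    by (apply Rmult_le_compat_l; lra).
  assert (Hbound : e * ln (INR q) <= M) by (unfold e, M; lra).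
  assert (Hcontra : e * (M / e) < e * ln (INR q)) by (apply Rmult_lt_compat_l; lra).
  replace (e * (M / e)) with M in Hcontra by (field; lra). lra.
Qed.

Lemma vdistZ_pos_of_no_relation (n : nat) (w : nat -> R) : (1 <= n)%nat ->
  (forall k, znonzero n k -> forall m, zdot n k w <> IZR m) ->
  forall T, (1 <= T)%nat -> 0 < vdistZ n (vscale T w).
Proof.
  intros Hn Hirr T HT.
  destruct (Rle_lt_or_eq_dec 0 _ (vdistZ_ge0 n (vscale T w))) as [L|E]; [exact L|exfalso].
  assert (H0 : distZ (INR T * w 0%nat) = 0).
  { pose proof (distZ_le_vdistZ n (vscale T w) 0 ltac:(lia)).
    pose proof (distZ_ge0 (INR T * w 0%nat)). unfold vscale in *. lra. }
  apply distZ_eq0 in H0.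
  set (k := fun i => if Nat.eqb i 0 then Z.of_nat T else 0%Z).
  assert (Hk : znonzero n k) by (exists 0%nat; split; [lia|unfold k; simpl; lia]).
  apply (Hirr k Hk (nearest_int (INR T * w 0%nat))).
  unfold zdot. rewrite (vsum_split n _ 0 ltac:(lia)), vsum_eq0, Rplus_0_l.
  - unfold k. simpl. rewrite <- INR_IZR_INZ. exact H0.
  - intros i Hi. unfold k. destruct (Nat.eqb_spec i 0); [reflexivity|]. ring.
Qed.

(* The last period [T_i <= 1/(2||<k,w>||)] satisfies [||<k, T_i w>|| = T_i ||<k,w>||]. *)
Lemma period_bracket_linear_form (n : nat) (w : nat -> R) (k : nat -> Z) :
  (1 <= n)%nat -> (forall T, (1 <= T)%nat -> 0 < vdistZ n (vscale T w)) ->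
  0 < distZ (zdot n k w) ->
  exists i Ti Ti1, Period n w i Ti /\ Period n w (S i) Ti1 /\
    INR Ti * distZ (zdot n k w) <= INR n * (znorm n k * vdistZ n (vscale Ti w)) /\
    / (2 * distZ (zdot n k w)) < INR Ti1.
Proof.
  intros Hn Hpos Hη. pose proof (distZ_le_half (zdot n k w)) as Hhalf.
  set (η := distZ (zdot n k w)) in *.
  destruct (nat_floor (/ (2 * η))) as [N [HN [HNlo HNhi]]].
  { rewrite <- Rinv_1. apply Rinv_le_contravar; lra. }
  destruct (period_bracket n w Hpos N HN) as [i [Ti [Ti1 [HP [HP1 [HTi HTi1]]]]]].
  exists i, Ti, Ti1. repeat split; try assumption.
  - assert (Hsmall : INR Ti * η <= / 2).
    { apply Rle_trans with (INR N * η); [apply Rmult_le_compat_r; [lra|apply le_INR, HTi]|].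
      apply (Rmult_le_compat_r η) in HNlo; [|lra].
      rewrite Rinv_mult, Rmult_assoc, Rinv_l, Rmult_1_r in HNlo by lra. exact HNlo. }
    unfold η. rewrite <- distZ_mul_nat, <- zdot_vscale by exact Hsmall.
    apply distZ_zdot_le.
  - apply Rlt_le_trans with (INR N + 1); [exact HNhi|]. rewrite <- S_INR. apply le_INR. lia.
Qed.

Lemma linear_form_bound_of_period_estimates (m : nat) (u P C0 K η δ Ti Ti1 : R) :
  (0 < m)%nat -> 0 < u -> 0 < P -> / u + / INR m = 1 + / P ->
  0 < C0 -> 0 < K -> 0 < η -> 0 < δ -> 0 < Ti -> 0 < Ti1 ->
  Ti * η <= INR m * (K * δ) -> Ti1 * δ ^ m <= 2 ^ m -> Ti1 <= C0 * Rpower Ti u ->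
  / (2 * η) < Ti1 ->
  exp (- P * (ln (INR m) + ln 2 + / u * ln C0 + (1 + / P) * ln 2)) * Rpower K (- P) <= η.
Proof.
  intros Hm Hu HP Hkey HC0 HK Hη Hδ HTi HTi1 Hform Hgrowth Hper Hlarge.
  assert (Hm' : 0 < INR m) by (apply lt_0_INR; lia).
  assert (Lform : ln Ti + ln η <= ln (INR m) + ln K + ln δ).
  { rewrite <- !ln_mult by nra. apply ln_le; [nra|]. rewrite Rmult_assoc. exact Hform. }
  assert (Lgrowth : ln Ti1 + INR m * ln δ <= INR m * ln 2).
  { rewrite <- !ln_pow, <- ln_mult by (auto using pow_lt; lra).
    apply ln_le; [apply Rmult_lt_0_compat; auto using pow_lt|exact Hgrowth]. }
  assert (Lper : ln Ti1 <= ln C0 + u * ln Ti) by (rewrite <- ln_mul_Rpower by lra; apply ln_le; lra).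
  assert (Llarge : - ln 2 - ln η <= ln Ti1).
  { replace (- ln 2 - ln η) with (ln (/ (2 * η))) by (rewrite ln_Rinv, ln_mult; lra).
    apply ln_le; [apply Rinv_0_lt_compat|]; lra. }
  assert (Lper' : / u * ln Ti1 <= / u * ln C0 + ln Ti).
  { replace (ln Ti) with (/ u * (u * ln Ti)) by (field; lra).
    rewrite <- Rmult_plus_distr_l. apply Rmult_le_compat_l; [left; apply Rinv_0_lt_compat|]; lra. }
  assert (Lgrowth' : ln δ <= ln 2 - / INR m * ln Ti1).
  { replace (ln δ) with (/ INR m * (INR m * ln δ)) by (field; lra).
    replace (ln 2 - / INR m * ln Ti1) with (/ INR m * (INR m * ln 2 - ln Ti1)) by (field; lra).
    apply Rmult_le_compat_l; [left; apply Rinv_0_lt_compat|]; lra. }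
  assert (Llarge' : (1 + / P) * (- ln 2 - ln η) <= (1 + / P) * ln Ti1).
  { apply Rmult_le_compat_l; [|exact Llarge]. pose proof (Rinv_0_lt_compat P HP). lra. }
  assert (Hexp : (/ u + / INR m) * ln Ti1 = (1 + / P) * ln Ti1) by now rewrite Hkey.
  assert (Hη' : - / P * ln η <= ln (INR m) + ln K + ln 2 + / u * ln C0 + (1 + / P) * ln 2) by lra.
  apply ln_le_inv; [apply Rmult_lt_0_compat; [apply exp_pos|apply Rpower_pos]|exact Hη|].
  rewrite ln_mul_Rpower, ln_exp by apply exp_pos.
  apply (Rmult_le_compat_l P) in Hη'; [|lra].
  replace (P * (- / P * ln η)) with (- ln η) in Hη' by (field; lra).
  lra.
Qed.

(* With [u = 1 + tau'] and [P = n (1 + tau)], the choice of [tau'] is exactly [1/u + 1/n = 1 + 1/P]. *)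
Lemma Omega_tilde_up (n : nat) (t : R) (w : nat -> R) : (1 <= n)%nat -> 0 <= t ->
  Omega_tilde n (t / ((INR n - 1) * t + INR n)) w -> Omega_up n t w.
Proof.
  intros Hn Ht [[C0 [HC0 Hper]] Hirr].
  pose proof (vdistZ_pos_of_no_relation n w Hn Hirr) as Hpos.
  assert (Hn' : 1 <= INR n) by (apply (le_INR 1); lia).
  set (u := 1 + t / ((INR n - 1) * t + INR n)) in Hper.
  set (P := INR n * (1 + t)).
  assert (Hu : 0 < u).
  { unfold u. assert (0 <= t / ((INR n - 1) * t + INR n)); [|lra].
    apply Rmult_le_pos; [lra|left; apply Rinv_0_lt_compat; nra]. }
  assert (HP : 0 < P) by (unfold P; nra).
  assert (Hkey : / u + / INR n = 1 + / P) by (unfold u, P; field; repeat split; nra).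
  eexists. split; [apply exp_pos|]. intros k Hk.
  set (η := distZ (zdot n k w)).
  assert (Hη : 0 < η).
  { destruct (Rle_lt_or_eq_dec 0 η (distZ_ge0 _)) as [L|E]; [exact L|exfalso].
    apply (Hirr k Hk (nearest_int (zdot n k w))), distZ_eq0. unfold η in E. lra. }
  destruct (period_bracket_linear_form n w k Hn Hpos Hη)
    as [i [Ti [Ti1 [HPi [HPi1 [Hform Hlarge]]]]]].
  replace (- ((1 + t) * INR n)) with (- P) by (unfold P; ring).
  apply Rle_ge, (linear_form_bound_of_period_estimates n u P C0 _ _ (vdistZ n (vscale Ti w)) (INR Ti) (INR Ti1));
    auto; try (apply lt_0_INR; lia).
  - pose proof (znorm_ge1 n k Hk). lra.
  - apply Hpos, (period_ge1 n w i), HPi.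
  - apply lt_0_INR, (period_ge1 n w i), HPi.
  - apply lt_0_INR, (period_ge1 n w (S i)), HPi1.
  - exact (period_succ_bound n w Hn i Ti Ti1 HPi HPi1).
  - exact (Hper i Ti Ti1 HPi HPi1).
Qed.

(* Pigeonhole on [sum_i c_i p_i mod T] over digit vectors [c] in [[0,H]^n], where [p_i] is the
   nearest integer to [T w_i]; the difference [k] of two colliding vectors has
   [<k, T w> = T s + sum_i k_i (T w_i - p_i)] for an integer [s]. *)
Lemma small_linear_form (n : nat) (w : nat -> R) (T H : nat) :
  (1 <= T)%nat -> (T < S H ^ n)%nat ->
  exists k, znonzero n k /\ znorm n k <= INR H /\
    distZ (zdot n k w) <= INR n * INR H * vdistZ n (vscale T w) / INR T.
Proof.
  intros HT HTH.
  set (p := fun i => nearest_int (INR T * w i)).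
  set (Sc := fun c => zsum n (fun i => Z.of_nat (digit (S H) c i) * p i)%Z).
  set (Tz := Z.of_nat T).
  destruct (pigeonhole T (fun c => Z.to_nat (Sc c mod Tz))) as [c1 [c2 [Hc E]]].
  { intros c _. pose proof (Z.mod_pos_bound (Sc c) Tz ltac:(lia)). unfold Tz in *. lia. }
  destruct (digits_differ (S H) n c2 c1) as [i0 [Hi0 Hdiff]]; try lia.
  set (k := fun i => (Z.of_nat (digit (S H) c2 i) - Z.of_nat (digit (S H) c1 i))%Z).
  exists k. split; [exists i0; split; [exact Hi0|unfold k; lia]|]. split.
  { apply vmax_le; [apply pos_INR|]. intros i _. rewrite Rabs_Zabs, INR_IZR_INZ. apply IZR_le.
    pose proof (digit_lt (S H) c1 i ltac:(lia)). pose proof (digit_lt (S H) c2 i ltac:(lia)).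
    unfold k. lia. }
  set (s := (Sc c2 / Tz - Sc c1 / Tz)%Z).
  assert (Hks : zsum n (fun i => k i * p i)%Z = (Tz * s)%Z).
  { replace (zsum n (fun i => k i * p i)%Z) with (Sc c2 - Sc c1)%Z
      by (unfold Sc, k; rewrite zsum_sub; apply zsum_ext; intros; ring).
    pose proof (Z.mod_pos_bound (Sc c1) Tz ltac:(lia)). pose proof (Z.mod_pos_bound (Sc c2) Tz ltac:(lia)).
    pose proof (Z.div_mod (Sc c1) Tz ltac:(lia)). pose proof (Z.div_mod (Sc c2) Tz ltac:(lia)).
    unfold s. nia. }
  set (eps := fun i => INR T * w i - IZR (p i)).
  assert (HT' : 0 < INR T) by (apply lt_0_INR; lia).
  assert (Hdot : INR T * zdot n k w = IZR (Tz * s) + vsum n (fun i => IZR (k i) * eps i)).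
  { unfold zdot. rewrite vsum_scal, <- Hks, IZR_zsum, vsum_plus. apply vsum_ext. intros i _.
    rewrite mult_IZR. unfold eps. ring. }
  replace (zdot n k w) with (IZR s + vsum n (fun i => IZR (k i) * eps i) / INR T).
  2:{ apply (Rmult_eq_reg_l (INR T)); [|lra]. rewrite Hdot, mult_IZR. unfold Tz.
      rewrite <- INR_IZR_INZ. field. lra. }
  rewrite Rplus_comm, distZ_addZ. eapply Rle_trans; [apply distZ_le_abs|].
  unfold Rdiv. rewrite Rabs_mult, (Rabs_right (/ INR T)) by (apply Rle_ge, Rlt_le, Rinv_0_lt_compat, HT').
  apply Rmult_le_compat_r; [apply Rlt_le, Rinv_0_lt_compat, HT'|].
  eapply Rle_trans; [apply Rabs_vsum|]. rewrite Rmult_assoc. apply vsum_le. intros i Hi.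
  rewrite Rabs_mult. apply Rmult_le_compat; try apply Rabs_pos.
  - rewrite Rabs_Zabs, INR_IZR_INZ. apply IZR_le.
    pose proof (digit_lt (S H) c1 i ltac:(lia)). pose proof (digit_lt (S H) c2 i ltac:(lia)).
    unfold k. lia.
  - unfold eps, p. rewrite <- distZ_nearest_int. exact (distZ_le_vdistZ n (vscale T w) i Hi).
Qed.

Lemma defect_bound_of_linear_form (m : nat) (t C K H δ T : R) :
  (0 < m)%nat -> 0 <= t -> 0 < C -> 0 < K <= H -> 0 <= δ -> 0 < T -> H ^ m <= T ->
  C * Rpower K (- ((1 + t) * INR m)) <= INR m * H * δ / T ->
  C / INR m * Rpower T (- (1 + INR m * t) / INR m) <= δ.
Proof.
  intros Hm Ht HC [HK HKH] Hδ0 HT HHT Hlow.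
  assert (Hm' : 1 <= INR m) by (apply (le_INR 1); lia).
  assert (Hpos : 0 < C * Rpower K (- ((1 + t) * INR m))) by (apply Rmult_lt_0_compat; auto using Rpower_pos).
  assert (Hδ : 0 < δ).
  { destruct (Rle_lt_or_eq_dec 0 δ Hδ0) as [L|E]; [exact L|].
    rewrite <- E, Rmult_0_r, Rdiv_0_l in Hlow. lra. }
  assert (Llow : ln C - (1 + t) * INR m * ln K <= ln (INR m) + ln H + ln δ - ln T).
  { replace (ln C - (1 + t) * INR m * ln K) with (ln (C * Rpower K (- ((1 + t) * INR m))))
      by (rewrite ln_mul_Rpower by lra; ring).
    replace (ln (INR m) + ln H + ln δ - ln T) with (ln (INR m * H * δ / T))
      by (unfold Rdiv; rewrite !ln_mult, ln_Rinv
            by (repeat apply Rmult_lt_0_compat; try apply Rinv_0_lt_compat; lra); ring).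
    apply ln_le; lra. }
  assert (LK : ln K <= ln H) by (apply ln_le; lra).
  assert (LH : INR m * ln H <= ln T) by (rewrite <- ln_pow by lra; apply ln_le; [apply pow_lt|]; lra).
  apply ln_le_inv; [apply Rmult_lt_0_compat; [apply Rdiv_lt_0_compat; lra|apply Rpower_pos]|exact Hδ|].
  rewrite ln_mul_Rpower by (apply Rdiv_lt_0_compat; lra).
  unfold Rdiv at 1. rewrite ln_mult, ln_Rinv by (try apply Rinv_0_lt_compat; lra).
  apply (Rmult_le_reg_l (INR m)); [lra|].
  replace (INR m * (ln C + - ln (INR m) + - (1 + INR m * t) / INR m * ln T))
    with (INR m * (ln C - ln (INR m)) - (1 + INR m * t) * ln T) by (field; lra).
  assert (G0 : INR m * (ln C - (1 + t) * INR m * ln K) <=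
               INR m * (ln (INR m) + ln H + ln δ - ln T)) by (apply Rmult_le_compat_l; lra).
  assert (G1 : 0 <= (1 + t) * INR m * INR m * (ln H - ln K))
    by (apply Rmult_le_pos; [apply Rmult_le_pos; [apply Rmult_le_pos|]|]; lra).
  assert (G2 : 0 <= (INR m + 1 + INR m * t) * (ln T - INR m * ln H))
    by (apply Rmult_le_pos; [assert (0 <= INR m * t) by (apply Rmult_le_pos; lra)|]; lra).
  lra.
Qed.

Lemma Omega_up_low (n : nat) (t : R) (w : nat -> R) : (1 <= n)%nat -> 0 <= t ->
  Omega_up n t w -> Omega_low n (INR n * t) w.
Proof.
  intros Hn Ht [C [HC Hup]].
  exists (C / INR n). split; [apply Rdiv_lt_0_compat; [lra|apply lt_0_INR; lia]|]. intros T HT.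
  destruct (nat_root n T Hn HT) as [H [HH [HHlo HHhi]]].
  destruct (small_linear_form n w T H HT HHhi) as [k [Hk [HKH Hform]]].
  apply Rle_ge, (defect_bound_of_linear_form n t C (znorm n k) (INR H)); auto.
  - pose proof (znorm_ge1 n k Hk). lra.
  - apply vdistZ_ge0.
  - apply lt_0_INR. lia.
  - rewrite <- pow_INR. apply le_INR, HHlo.
  - eapply Rle_trans; [apply Rge_le, Hup, Hk|exact Hform].
Qed.

Theorem mainTheorem1 (n : nat) (tau : R) :
  (1 <= n)%nat -> 0 <= tau ->
  let tau' := tau / ((INR n - 1) * tau + INR n) in
  (forall w, Omega_low n tau' w -> Omega_tilde n tau' w) /\
  (forall w, Omega_tilde n tau' w -> Omega_up n tau w) /\
  (forall w, Omega_up n tau w -> Omega_low n (INR n * tau) w).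
Proof.
  intros Hn Htau tau'.
  assert (Hn' : 1 <= INR n) by (apply (le_INR 1); lia).
  assert (HD : 0 < (INR n - 1) * tau + INR n) by nra.
  assert (Htau' : 0 <= tau') by (apply Rmult_le_pos; [|left; apply Rinv_0_lt_compat]; lra).
  assert (Hsmall : (INR n - 1) * (1 + tau') < INR n).
  { unfold tau'. apply (Rmult_lt_reg_r ((INR n - 1) * tau + INR n)); [exact HD|].
    field_simplify; [nra|lra]. }
  split; [|split].
  - intros w Hw. split.
    + exact (Omega_low_per n tau' w Hn Hw).
    + exact (Omega_low_no_relation n tau' w Hn Htau' Hsmall Hw).
  - intro w. exact (Omega_tilde_up n tau w Hn Htau).
  - intro w. exact (Omega_up_low n tau w Hn Htau).
Qed.
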